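(* Let $k$ be an infinite field, let $A$ be a $k$-algebra, let $a_1,\ldots,a_m\in A$ and $d\ge1$. If each element of $ka_1+\cdots+ka_m$ is algebraic over $k$ of degree at most $d$, then $P_{\ge0}(a_1,\ldots,a_m)\subseteq P_{\le d-1}(a_1,\ldots,a_m)$; in particular $\dim_kP_{\ge0}(a_1,\ldots,a_m)<\infty$.
   Context: Algebras are associative with unit. For nonnegative integers $i_1,\ldots,i_m$, $p_{i_1,\ldots,i_m}(x_1,\ldots,x_m)$ is the sum of all distinct noncommutative monomials with exactly $i_j$ occurrences of $x_j$ for each $j$ ($p_{0,\ldots,0}=1$); $p_{i_1,\ldots,i_m}(a_1,\ldots,a_m)$ is its evaluation at $x_j=a_j$. $P_n(a_1,\ldots,a_m)=\operatorname{span}_k\{p_{i_1,\ldots,i_m}(a_1,\ldots,a_m)\mid i_1+\cdots+i_m=n\}$, $P_{\le r}(a_1,\ldots,a_m)=\sum_{n=0}^rP_n(a_1,\ldots,a_m)$, and $P_{\ge r}(a_1,\ldots,a_m)=\sum_{n=r}^\infty P_n(a_1,\ldots,a_m)$. Algebraic of degree at most $d$ means a root of a nonzero polynomial in $k[t]$ of degree at most $d$. *)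

From HB Require Import structures.
From mathcomp Require Import all_boot all_order all_algebra.
Set Implicit Arguments. Unset Strict Implicit. Unset Printing Implicit Defensive.
Import GRing.Theory.
Local Open Scope ring_scope.

Section PDefs.
Variables (k : fieldType) (A : algType k) (m : nat) (a : 'I_m -> A).

(* p_{i_1,...,i_m}(a_1,...,a_m): the sum, over all words w of length
   i_1+...+i_m in the letters 0..m-1 containing letter j exactly i_j times,
   of the product a_{w_1} * ... * a_{w_n}.  Distinct noncommutative monomials
   correspond exactly to distinct such words. *)
Definition pmono (i : 'I_m -> nat) : A :=
  \sum_(w : (\sum_(j < m) i j)%N.-tuple 'I_m | [forall j, count_mem j w == i j])
     \prod_(x <- w) a x.

Definition kspan (S : A -> Prop) (x : A) : Prop :=
  exists (n : nat) (c : 'I_n -> k) (v : 'I_n -> A),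
    (forall t, S (v t)) /\ x = \sum_(t < n) c t *: v t.

Definition Pn (n : nat) : A -> Prop :=
  kspan (fun y => exists i : 'I_m -> nat, (\sum_(j < m) i j)%N = n /\ y = pmono i).

Definition Ple (r : nat) : A -> Prop :=
  kspan (fun y => exists n, (n <= r)%N /\ Pn n y).

Definition Pge (r : nat) : A -> Prop :=
  kspan (fun y => exists n, (r <= n)%N /\ Pn n y).
End PDefs.

Definition algebraic_le (k : fieldType) (A : algType k) (d : nat) (x : A) : Prop :=
  exists q : {poly k}, q != 0 /\ (size q <= d.+1)%N /\ horner_alg x q = 0.

Definition infinite_field (k : fieldType) : Prop :=
  forall s : seq k, exists x : k, x \notin s.

From HB Require Import structures.
From mathcomp Require Import all_boot all_order all_algebra.
Set Implicit Arguments. Unset Strict Implicit. Unset Printing Implicit Defensive.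
Import GRing.Theory.
Local Open Scope ring_scope.

(* Every power of x = sum_j c_j a_j lies in P_{<= d-1}: it is a combination of
   x^0, ..., x^(d-1) by the algebraic relation, and x^l lies in P_l by the
   multinomial expansion.  Expanding x^n and viewing the c_j as indeterminates,
   the coefficient of the monomial prod_j c_j^(i_j) is p_i(a); since k is
   infinite, a Vandermonde argument applied one variable at a time extracts that
   coefficient inside any subspace containing all the powers of x.  Hence every
   p_i(a) lies in P_{<= d-1}, which is spanned by the finitely many p_i(a) with
   all i_j <= d-1. *)

Definition subspace (k : fieldType) (A : lmodType k) (V : A -> Prop) :=
  [/\ V 0, (forall x y, V x -> V y -> V (x + y)) & (forall c x, V x -> V (c *: x))].

Lemma infinite_field_uniq_seq (k : fieldType) : infinite_field k ->
  forall N, exists s : seq k, uniq s /\ size s = N.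
Proof.
move=> inf; elim=> [|N [s [us ss]]]; first by exists [::].
by have [x xs] := inf s; exists (x :: s); rewrite /= xs us ss.
Qed.

Section Subspace.
Variables (k : fieldType) (A : lmodType k) (V : A -> Prop).
Hypothesis sV : subspace V.

Lemma subspace0 : V 0.
Proof. by case: sV. Qed.

Lemma subspaceZ c x : V x -> V (c *: x).
Proof. by case: sV => _ _; apply. Qed.

Lemma subspace_sum (I : Type) (r : seq I) (P : pred I) (F : I -> A) :
  (forall i, P i -> V (F i)) -> V (\sum_(i <- r | P i) F i).
Proof. by case: sV => V0 VD _ HF; apply: big_ind. Qed.

Hypothesis inf : infinite_field k.

Lemma subspace_vandermonde N (F : nat -> A) :
  (forall z, V (\sum_(t < N) z ^+ t *: F t)) -> forall t, (t < N)%N -> V (F t).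
Proof.
move=> HF t tN; have [s [us ss]] := infinite_field_uniq_seq inf N.
pose z : 'rV[k]_N := \row_i s`_i.
pose M := Vandermonde N z.
have uM : M \in unitmx.
  rewrite unitmxE unitfE det_Vandermonde; apply/prodf_neq0 => i _.
  apply/prodf_neq0 => j ij; rewrite !mxE subr_eq0 nth_uniq ?ss //.
  by apply/eqP => /val_inj eij; rewrite eij ltnn in ij.
pose t0 : 'I_N := Ordinal tN.
have MV (j : 'I_N) : \sum_(i < N) invmx M i t0 * z 0 i ^+ j = (j == t0)%:R.
  have := congr1 (fun X : 'M[k]_N => X j t0) (mulmxV uM); rewrite !mxE => <-.
  by apply: eq_bigr => i _; rewrite !mxE mulrC.
have : V (\sum_(i < N) invmx M i t0 *: \sum_(j < N) z 0 i ^+ j *: F j).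
  by apply: subspace_sum => i _; apply/subspaceZ/HF.
congr V; under eq_bigr do rewrite scaler_sumr.
rewrite exchange_big /=.
under eq_bigr do under eq_bigr do rewrite scalerA.
under eq_bigr do rewrite -scaler_suml MV.
rewrite (bigD1 t0) //= eqxx scale1r big1 ?addr0 // => j /negbTE ->.
by rewrite scale0r.
Qed.

Lemma subspace_degree_part (W : finType) (P : pred W) (e : W -> nat) (u : W -> A) :
  (forall z, V (\sum_(w | P w) z ^+ e w *: u w)) ->
  forall t, V (\sum_(w | P w && (e w == t)) u w).
Proof.
move=> HV t; pose N := (\max_w e w).+1.
have eN w : (e w < N)%N by rewrite ltnS leq_bigmax.
have [tN|Nt] := ltnP t N; last first.
  rewrite big_pred0; first exact: subspace0.
  by move=> w; apply/negbTE; rewrite negb_and (ltn_eqF (leq_trans (eN w) Nt)) orbT.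
apply: (subspace_vandermonde (F := fun t => \sum_(w | P w && (e w == t)) u w) _ tN).
move=> z; have := HV z; congr V.
rewrite (partition_big (fun w => inord (e w) : 'I_N) xpredT) //=.
apply: eq_bigr => s _; rewrite scaler_sumr; apply: eq_big => w.
  by rewrite -val_eqE /= inordK.
by case/andP=> _ /eqP <-; rewrite inordK.
Qed.

Lemma subspace_multidegree_part m (W : finType) (e : W -> 'I_m -> nat) (v : W -> A) :
  (forall c : 'I_m -> k, V (\sum_w (\prod_(j < m) c j ^+ e w j) *: v w)) ->
  forall i : 'I_m -> nat, V (\sum_(w | [forall j, e w j == i j]) v w).
Proof.
move=> H i.
(* Induction on r: the exponents of the first r variables are fixed to i, the others still vary. *)
have fix_first r : (r <= m)%N -> forall c : 'I_m -> k,
    V (\sum_(w | [forall j : 'I_m, (j < r)%N ==> (e w j == i j)])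
         (\prod_(j < m | (r <= j)%N) c j ^+ e w j) *: v w).
  elim: r => [_ c|r IH rm c].
    by rewrite (eq_bigl xpredT) => [|w]; [exact: H | apply/forallP].
  pose jr : 'I_m := Ordinal rm.
  pose u w := (\prod_(j < m | (r < j)%N) c j ^+ e w j) *: v w.
  have vary_jr z : V (\sum_(w | [forall j : 'I_m, (j < r)%N ==> (e w j == i j)])
                        z ^+ e w jr *: u w).
    have := IH (ltnW rm) (fun j => if j == jr then z else c j); congr V.
    apply: eq_bigr => w _; rewrite scalerA (bigD1 jr) //= eqxx; congr (_ * _ *: _).
    apply: eq_big => [j|j /andP[_ /negbTE ->] //].
    by rewrite andbC ltn_neqAle; congr (_ && _); rewrite eq_sym.
  have := subspace_degree_part vary_jr (i jr); congr V.
  apply: eq_bigl => w; apply/andP/forallP => [[/forallP Hw ej] j|Hw].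
    apply/implyP; rewrite ltnS leq_eqVlt => /orP[/eqP rj|]; last exact/implyP/Hw.
    by rewrite (_ : j = jr) //; apply: val_inj.
  split; last by have /implyP := Hw jr; apply.
  by apply/forallP => j; apply/implyP => jr'; have /implyP := Hw j; apply; apply: ltnW.
have := fix_first m (leqnn m) (fun _ => 1); congr V; apply: eq_big => w.
  by apply: eq_forallb => j; rewrite ltn_ord.
by move=> _; rewrite big_pred0 ?scale1r // => j; rewrite leqNgt ltn_ord.
Qed.

End Subspace.

Section Span.
Variables (k : fieldType) (A : algType k).

Lemma kspan_subspace (S : A -> Prop) : subspace (kspan S).
Proof.
split.
- exists 0%N, (fun _ => 0), (fun _ => 0); split; first by case.
  by rewrite big_ord0.
- move=> x y [n1 [c1 [v1 [S1 ->]]]] [n2 [c2 [v2 [S2 ->]]]].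
  exists (n1 + n2)%N, (fun t => match split t with inl u => c1 u | inr u => c2 u end).
  exists (fun t => match split t with inl u => v1 u | inr u => v2 u end).
  split; first by move=> t; case: (split t).
  rewrite big_split_ord /=; congr (_ + _); apply: eq_bigr => i _.
    by rewrite (unsplitK (inl i : 'I_n1 + 'I_n2)).
  by rewrite (unsplitK (inr i : 'I_n1 + 'I_n2)).
- move=> c x [n [c1 [v [S1 ->]]]]; exists n, (fun t => c * c1 t), v; split => //.
  by rewrite scaler_sumr; apply: eq_bigr => i _; rewrite scalerA.
Qed.

Lemma kspan_in (S : A -> Prop) y : S y -> kspan S y.
Proof.
by move=> Sy; exists 1%N, (fun _ => 1), (fun _ => y); rewrite big_ord1 scale1r.
Qed.

Lemma kspan_sub (S V : A -> Prop) :
  subspace V -> (forall y, S y -> V y) -> forall x, kspan S x -> V x.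
Proof.
move=> sV SV x [n [c [v [Sv ->]]]].
by apply: subspace_sum => // i _; apply/(subspaceZ sV)/SV.
Qed.

Lemma algebraic_le_expr_span d (x : A) : algebraic_le d x ->
  forall n, kspan (fun y => exists l, (l < d)%N /\ y = x ^+ l) (x ^+ n).
Proof.
move=> [q [q0 [sq qx]]]; set e := (size q).-1.
have se : size q = e.+1 by rewrite prednK // lt0n size_poly_eq0.
have le : q`_e != 0 by rewrite -lead_coefE lead_coef_eq0.
have qx_sum : \sum_(i < e.+1) q`_i *: x ^+ i = 0.
  rewrite -se -[RHS]qx -[in RHS](coefK q) poly_def linear_sum; apply: eq_bigr => i _.
  by rewrite linearZ /= rmorphXn /= horner_algX mulr_algl.
have xe : x ^+ e = \sum_(i < e) (- (q`_e)^-1 * q`_i) *: x ^+ i.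
  move/eqP: qx_sum; rewrite big_ord_recr /= addrC addr_eq0 => /eqP xe.
  rewrite -[x ^+ e]scale1r -(mulVf le) -scalerA xe scalerN -scaleNr scaler_sumr.
  by apply: eq_bigr => i _; rewrite scalerA mulNr.
have sV := kspan_subspace (fun y => exists l, (l < d)%N /\ y = x ^+ l).
elim/ltn_ind => n IH; have [nd|dn] := ltnP n d; first by apply: kspan_in; exists n.
have en : (e <= n)%N by apply: leq_trans dn; rewrite -ltnS -se.
rewrite -(subnK en) exprD xe mulr_sumr; apply: subspace_sum => // i _.
rewrite -scalerAr -exprD; apply/(subspaceZ sV)/IH.
by rewrite -{2}(subnK en) ltn_add2l.
Qed.

End Span.

Definition word n m (f : {ffun 'I_n -> 'I_m}) : n.-tuple 'I_m := [tuple f t | t < n].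

Definition letter_count n m (f : {ffun 'I_n -> 'I_m}) (j : 'I_m) : nat :=
  count_mem j (word f).

Lemma letter_count_le n m (f : {ffun 'I_n -> 'I_m}) j : (letter_count f j <= n)%N.
Proof. by have := count_size (pred1 j) (word f); rewrite size_tuple. Qed.

Lemma sum_count_mem m (s : seq 'I_m) : (\sum_(j < m) count_mem j s)%N = size s.
Proof.
elim: s => [|x s IH]; first by rewrite big1.
rewrite /= -IH big_split /= (bigD1 x) //= eqxx big1 // => j /negbTE.
by rewrite eq_sym => ->.
Qed.

Lemma sum_letter_count n m (f : {ffun 'I_n -> 'I_m}) :
  (\sum_(j < m) letter_count f j)%N = n.
Proof. by rewrite sum_count_mem size_tuple. Qed.

Lemma big_word (R : Type) (idx : R) (op : Monoid.law idx) n m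
    (f : {ffun 'I_n -> 'I_m}) (F : 'I_m -> R) :
  \big[op/idx]_(x <- word f) F x = \big[op/idx]_(t < n) F (f t).
Proof. by rewrite big_tuple; apply: eq_bigr => t _; rewrite tnth_mktuple. Qed.

Lemma prod_count_mem (R : comNzRingType) m (c : 'I_m -> R) (s : seq 'I_m) :
  \prod_(x <- s) c x = \prod_(j < m) c j ^+ count_mem j s.
Proof.
elim: s => [|x s IH]; first by rewrite big_nil big1.
under [RHS]eq_bigr do rewrite /= exprD.
rewrite big_cons IH big_split /=; congr (_ * _).
rewrite (bigD1 x) //= eqxx expr1 big1 ?mulr1 //.
by move=> j /negbTE; rewrite eq_sym => ->.
Qed.

Section Monomials.
Variables (k : fieldType) (A : algType k) (m : nat) (a : 'I_m -> A).

Lemma expr_lincomb (c : 'I_m -> k) n :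
  (\sum_(j < m) c j *: a j) ^+ n =
  \sum_(f : {ffun 'I_n -> 'I_m}) (\prod_(j < m) c j ^+ letter_count f j) *: \prod_(t < n) a (f t).
Proof.
rewrite -[n in LHS]card_ord -prodr_const bigA_distr_bigA; apply: eq_bigr => f _.
by rewrite scaler_prod -prod_count_mem big_word.
Qed.

Lemma pmonoE (i : 'I_m -> nat) n : (\sum_(j < m) i j)%N = n ->
  pmono a i = \sum_(f : {ffun 'I_n -> 'I_m} | [forall j, letter_count f j == i j])
                 \prod_(t < n) a (f t).
Proof.
move=> <-; rewrite /pmono (reindex (@word _ m)) /=.
  by apply: eq_bigr => f _; rewrite big_word.
apply: onW_bij; exists (fun w => [ffun t => tnth w t]).
  by move=> f; apply/ffunP => t; rewrite ffunE tnth_mktuple.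
by move=> w; apply: eq_from_tnth => t; rewrite tnth_mktuple ffunE.
Qed.

Lemma eq_pmono (i1 i2 : 'I_m -> nat) : i1 =1 i2 -> pmono a i1 = pmono a i2.
Proof.
move=> E; have S : (\sum_(j < m) i2 j)%N = (\sum_(j < m) i1 j)%N.
  by apply: eq_bigr => j _; rewrite E.
rewrite (pmonoE (erefl _)) (pmonoE S).
by apply: eq_bigl => f; apply: eq_forallb => j; rewrite E.
Qed.

Lemma expr_lincomb_Pn (c : 'I_m -> k) l : Pn a l ((\sum_(j < m) c j *: a j) ^+ l).
Proof.
have sP := kspan_subspace
  (fun y => exists i : 'I_m -> nat, (\sum_(j < m) i j)%N = l /\ y = pmono a i).
pose count_vector (f : {ffun 'I_l -> 'I_m}) :=
  [ffun j => inord (letter_count f j) : 'I_l.+1].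
have count_vectorE f g : (count_vector f == g) = [forall j, letter_count f j == g j].
  apply/eqP/forallP => [<- j|Hf]; first by rewrite ffunE inordK // ltnS letter_count_le.
  by apply/ffunP => j; apply: val_inj; rewrite ffunE /= (eqP (Hf j)) inordK.
rewrite expr_lincomb (partition_big count_vector xpredT) //=.
apply: subspace_sum => // g _.
rewrite (eq_big (fun f => [forall j, letter_count f j == g j])
  (fun f => (\prod_(j < m) c j ^+ g j) *: \prod_(t < l) a (f t))); first last.
- by move=> f; rewrite count_vectorE => /forallP Hf; under eq_bigr do rewrite (eqP (Hf _)).
- by move=> f; rewrite count_vectorE.
rewrite -scaler_sumr; apply: (subspaceZ sP).
have [gl|gl] := eqVneq (\sum_(j < m) g j)%N l.
  by rewrite -(pmonoE gl); apply: kspan_in; exists (fun j => nat_of_ord (g j)).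
rewrite big_pred0; first exact: subspace0 sP.
move=> f; apply/negbTE/forallP => Hf; move/eqP: gl; apply.
by apply: etrans (sum_letter_count f); apply: eq_bigr => j _; rewrite (eqP (Hf j)).
Qed.

Lemma subspace_pmono (V : A -> Prop) : subspace V -> infinite_field k ->
  (forall (c : 'I_m -> k) n, V ((\sum_(j < m) c j *: a j) ^+ n)) ->
  forall i, V (pmono a i).
Proof.
move=> sV inf powV i; rewrite (pmonoE (erefl _)).
by apply: (subspace_multidegree_part sV inf) => c; rewrite -expr_lincomb.
Qed.

Definition pmonos_lt r : seq A :=
  [seq pmono a (fun j => nat_of_ord (g j)) | g : {ffun 'I_m -> 'I_r}].

Lemma Ple_sub_pmonos r x : Ple a r x -> kspan (fun y => y \in pmonos_lt r.+1) x.
Proof.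
apply: (kspan_sub (kspan_subspace _)) => y [n [nr]].
apply: (kspan_sub (kspan_subspace _)) => z [i [si ->]].
apply/kspan_in/mapP; exists [ffun j => inord (i j) : 'I_r.+1]; first by rewrite mem_enum.
apply: eq_pmono => j; rewrite ffunE inordK // ltnS (leq_trans _ nr) // -si.
by rewrite (bigD1 j) //= leq_addr.
Qed.

Lemma pmonos_sub_Pge0 r x : kspan (fun y => y \in pmonos_lt r) x -> Pge a 0 x.
Proof.
apply: (kspan_sub (kspan_subspace _)) => y /mapP [g _ ->].
apply: kspan_in; exists (\sum_(j < m) g j)%N; split => //.
by apply: kspan_in; exists (fun j => nat_of_ord (g j)).
Qed.

End Monomials.

Theorem corollary3p3 (k : fieldType) (A : algType k) (m : nat) (a : 'I_m -> A) (d : nat) :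
  infinite_field k -> (1 <= d)%N ->
  (forall c : 'I_m -> k, algebraic_le d (\sum_(j < m) c j *: a j)) ->
  (forall x : A, Pge a 0 x -> Ple a d.-1 x) /\
  (exists s : seq A, forall x : A, Pge a 0 x <-> kspan (fun y => y \in s) x).
Proof.
move=> inf; case: d => // d _ alg /=.
have sV : subspace (Ple a d) := kspan_subspace _.
have powV c n : Ple a d ((\sum_(j < m) c j *: a j) ^+ n).
  apply: (kspan_sub sV _ (algebraic_le_expr_span (alg c) n)) => y [l [ld ->]].
  by apply: kspan_in; exists l; split; last exact: expr_lincomb_Pn.
have Pge0_sub : forall x, Pge a 0 x -> Ple a d x.
  apply: (kspan_sub sV) => y [n [_]].
  by apply: (kspan_sub sV) => z [i [_ ->]]; apply: subspace_pmono.
split => //; exists (pmonos_lt a d.+1) => x; split.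
  by move/Pge0_sub/Ple_sub_pmonos.
exact: pmonos_sub_Pge0.
Qed.
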